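(* Let $q^{**}(g)=\max\{q(R): K(g;R)\le1\}$. Then the width of the Finsleroid is $$2q^{**}(g)=2\,e^{-\frac12G\Phi^{**}},$$ where $\Phi^{**}=\Phi(g;R)$ evaluated at any $R$ with $q(R)>0$ and $Z=-g\,q(R)$ (this value does not depend on the choice of such $R$); moreover the maximum is attained at points with $Z=-g\,q$.
   Context: Let $N\ge2$, $V_N=\mathbb{R}^N$ with points $R=(R^1,\dots,R^N)$, $Z=R^N$; indices $a,b$ run over $1,\dots,N-1$, repeated indices summed. Fix a symmetric positive-definite matrix $(r_{ab})$, $q(R)=\sqrt{r_{ab}R^aR^b}$. Fix $g\in(-2,2)$, $h=\sqrt{1-g^2/4}$, $G=g/h$. Define $B(g;R)=Z^2+gqZ+q^2$, $A(g;R)=Z+\frac12gq$, $\Phi(g;R)=\arctan(A/(hq))$ for $q>0$ ($\Phi=\pm\pi/2$ if $q=0$, $Z\gtrless0$), $J=e^{\frac12G\Phi}$, and the Finsleroid metric function $K(g;R)=\sqrt{B}\,J$ ($K(g;0)=0$). The Finsleroid is $\{R:K(g;R)\le1\}$. *)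

From HB Require Import structures.
From mathcomp Require Import all_boot all_order all_algebra.
From mathcomp Require Import all_classical all_reals all_analysis.
Set Implicit Arguments. Unset Strict Implicit. Unset Printing Implicit Defensive.
Import Order.TTheory GRing.Theory Num.Theory.
Local Open Scope ring_scope.

(* Points of V_N = R^N with N = n.+2 (so N >= 2) are row vectors 'rV[R]_(n.+2).
   The "horizontal" indices a = 1..N-1 are 'I_(n.+1), embedded by widen_ord;
   Z = R^N is the last coordinate (ord_max). *)
Section Finsleroid.
Variable R : realType.
Variable n : nat.

Definition Xc (v : 'rV[R]_(n.+2)) (a : 'I_(n.+1)) : R :=
  v 0 (widen_ord (leqnSn n.+1) a).

Definition Zc (v : 'rV[R]_(n.+2)) : R := v 0 ord_max.

Definition qf (r : 'M[R]_(n.+1)) (v : 'rV[R]_(n.+2)) : R :=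
  Num.sqrt (\sum_(a < n.+1) \sum_(b < n.+1) r a b * Xc v a * Xc v b).

Definition hF (g : R) : R := Num.sqrt (1 - g ^+ 2 / 4).
Definition GF (g : R) : R := g / hF g.

Definition BF (r : 'M[R]_(n.+1)) (g : R) (v : 'rV[R]_(n.+2)) : R :=
  Zc v ^+ 2 + g * qf r v * Zc v + qf r v ^+ 2.

Definition AF (r : 'M[R]_(n.+1)) (g : R) (v : 'rV[R]_(n.+2)) : R :=
  Zc v + g * qf r v / 2.

(* Phi = arctan(A/(h q)) for q > 0; +-pi/2 if q = 0 and Z >< 0
   (the value at q = 0, Z = 0, i.e. R = 0, is irrelevant and set to -pi/2). *)
Definition PhiF (r : 'M[R]_(n.+1)) (g : R) (v : 'rV[R]_(n.+2)) : R :=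
  if 0 < qf r v then atan (AF r g v / (hF g * qf r v))
  else if 0 < Zc v then pi / 2 else - (pi / 2).

Definition JF (r : 'M[R]_(n.+1)) (g : R) (v : 'rV[R]_(n.+2)) : R :=
  expR (GF g * PhiF r g v / 2).

Definition KF (r : 'M[R]_(n.+1)) (g : R) (v : 'rV[R]_(n.+2)) : R :=
  if v == 0 then 0 else Num.sqrt (BF r g v) * JF r g v.

Definition sym_posdef (r : 'M[R]_(n.+1)) : Prop :=
  r^T = r /\ forall x : 'rV[R]_(n.+1), x != 0 -> 0 < (x *m r *m x^T) 0 0.

End Finsleroid.

(* With s := A / q one has B = q^2 (s^2 + h^2) and A / (h q) = s / h, so
   K^2 * V(s) = q^2 for the profile V(s) := exp(-G atan(s/h)) / (s^2 + h^2),
   which depends only on the direction of R.  Since V'(s) has the sign of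
   -G h - 2 s, V has a strict global maximum at s = -G h / 2 = -g / 2, i.e. on
   the ray Z = -g q, and there h^2 + g^2 / 4 = 1 gives V = exp(-G Phi_star).
   Hence K <= 1 forces q^2 <= V(s) <= exp(-G Phi_star), with equality only on
   that ray, where K = q exp(G Phi_star / 2). *)
Set Warnings "-notation-overridden,-ambiguous-paths,-notation-incompatible-prefix,-parsing".
From HB Require Import structures.
From mathcomp Require Import all_boot all_order all_algebra.
From mathcomp Require Import all_classical all_reals all_analysis.
From mathcomp Require Import ring lra.
Import Order.TTheory GRing.Theory Num.Theory.
Local Open Scope ring_scope.

Section Profile.
Context {R : realType} (k h : R).
Hypothesis h_gt0 : 0 < h.

Definition profile (s : R) : R := expR (k * atan (s / h)) / (s ^+ 2 + h ^+ 2).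

Let sqr_add_gt0 (s : R) : 0 < s ^+ 2 + h ^+ 2.
Proof. by rewrite ltr_wpDl ?sqr_ge0 ?exprn_gt0. Qed.

Lemma profile_gt0 (s : R) : 0 < profile s.
Proof. by rewrite divr_gt0 ?expR_gt0. Qed.

Lemma is_derive_profile (s : R) :
  is_derive s 1 profile (profile s * (k * h - 2 * s) / (s ^+ 2 + h ^+ 2)).
Proof.
have den_neq0 := lt0r_neq0 (sqr_add_gt0 s).
have h_neq0 : h != 0 by rewrite gt_eqF.
have d_div : is_derive s 1 (fun y => y / h) _ :=
  is_deriveM (is_derive_id s 1) (is_derive_cst h^-1 s 1).
have d_atan := @is_derive1_comp _ atan (fun y => y / h) s _ _
  (is_derive1_atan (s / h)) d_div.
have d_num := is_derive1_comp (is_derive_expR _) (is_deriveZ k d_atan).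
have d_den := is_deriveD (is_deriveX 2 (is_derive_id s 1)) (is_derive_cst (h ^+ 2) s 1).
have d_profile : is_derive s 1 profile _ :=
  is_deriveM d_num (@is_deriveV R _ s _ _ den_neq0 d_den).
apply: (is_derive_eq d_profile).
rewrite /= /profile -[(id ^+ 2 + cst (h ^+ 2)) s]/(s ^+ 2 + h ^+ 2).
have scaleE (x y : R) : x *: y = x * y by [].
rewrite !scaleE mulr0 mulr1 !add0r addr0.
have -> : 1 + (s / h) ^+ 2 = (s ^+ 2 + h ^+ 2) / h ^+ 2 by field.
by field; rewrite den_neq0 h_neq0.
Qed.

Lemma profile_lt_max (s : R) : s != k * h / 2 -> profile s < profile (k * h / 2).
Proof.
have profile_mvt (a b : R) : a < b -> exists2 c, a < c < b &
    profile b - profile a = profile c * (k * h - 2 * c) / (c ^+ 2 + h ^+ 2) * (b - a).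
  have derivable_profile x : derivable profile x 1 by case: (is_derive_profile x).
  move=> ab; have [c] := MVT ab (fun x _ => is_derive_profile x)
    (derivable_within_continuous (fun x _ => derivable_profile x)).
  by rewrite in_itv /=; exists c.
have pc_gt0 c := profile_gt0 c; have dc_gt0 c := sqr_add_gt0 c.
case: (ltgtP s (k * h / 2)) => // [s_lt | s_gt] _.
- have [c /andP[sc cm] diff] := profile_mvt _ _ s_lt.
  rewrite -subr_gt0 diff mulr_gt0 ?subr_gt0 // mulr_gt0 ?invr_gt0 //.
  by rewrite mulr_gt0 // subr_gt0; lra.
- have [c /andP[mc cs] diff] := profile_mvt _ _ s_gt.
  rewrite -subr_lt0 diff pmulr_llt0 ?subr_gt0 // pmulr_llt0 ?invr_gt0 //.
  by rewrite pmulr_rlt0 // subr_lt0; lra.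
Qed.

End Profile.

Section Coordinates.
Context {R : realType} {n : nat} {r : 'M[R]_n.+1}.

Definition plane_point (t z : R) : 'rV[R]_n.+2 :=
  \row_j (if j == ord_max then z else if (j : nat) == 0%N then t else 0).

Lemma Xc_plane_point (t z : R) (a : 'I_n.+1) :
  Xc (plane_point t z) a = if (a : nat) == 0%N then t else 0.
Proof.
rewrite /Xc /plane_point mxE; case: eqP => // /(congr1 val) /= a_eq.
by move: (ltn_ord a); rewrite a_eq ltnn.
Qed.

Lemma Zc_plane_point (t z : R) : Zc (plane_point t z) = z.
Proof. by rewrite /Zc /plane_point mxE eqxx. Qed.

Lemma qf_plane_point (t z : R) : qf r (plane_point t z) = Num.sqrt (r 0 0 * t * t).
Proof.
rewrite /qf big_ord_recl [X in _ + X]big1 ?addr0; last first.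
  by move=> i _; apply: big1 => j _; rewrite !Xc_plane_point /= mulr0 mul0r.
rewrite big_ord_recl [X in _ + X]big1 ?addr0; last by move=> i _; rewrite !Xc_plane_point /= mulr0.
by rewrite !Xc_plane_point.
Qed.

Lemma qf0 : qf r 0 = 0.
Proof.
by rewrite /qf big1 ?sqrtr0 // => i _; apply: big1 => j _; rewrite /Xc mxE mulr0 mul0r.
Qed.

Lemma sym_posdef_diag_gt0 : sym_posdef r -> 0 < r 0 0.
Proof.
move=> [_ r_pos].
pose e0 : 'rV[R]_n.+1 := \row_j (if (j : nat) == 0%N then 1 else 0).
have e0_neq0 : e0 != 0 by apply/eqP => /matrixP/(_ 0 0)/eqP; rewrite !mxE oner_eq0.
have := r_pos e0 e0_neq0.
rewrite !mxE big_ord_recl big1 ?addr0; last by move=> i _; rewrite !mxE /= mulr0.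
rewrite !mxE /= mulr1 big_ord_recl big1 ?addr0; last by move=> i _; rewrite !mxE /= mul0r.
by rewrite !mxE /= mul1r.
Qed.

Lemma exists_qf_Zc (q z : R) : sym_posdef r -> 0 <= q ->
  exists v : 'rV[R]_n.+2, qf r v = q /\ Zc v = z.
Proof.
move=> /sym_posdef_diag_gt0 r00_gt0 q_ge0.
have sqrt_r00_gt0 : 0 < Num.sqrt (r 0 0) by rewrite sqrtr_gt0.
exists (plane_point (q / Num.sqrt (r 0 0)) z); split; last exact: Zc_plane_point.
rewrite qf_plane_point -{1}[r 0 0]sqr_sqrtr ?ltW //.
have -> : Num.sqrt (r 0 0) ^+ 2 * (q / Num.sqrt (r 0 0)) * (q / Num.sqrt (r 0 0)) = q ^+ 2.
  by field; rewrite gt_eqF.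
by rewrite sqrtr_sqr ger0_norm.
Qed.

End Coordinates.

Definition Phi_star {R : realType} (g : R) : R := atan (- GF g / 2).
Definition q_star {R : realType} (g : R) : R := expR (- (GF g * Phi_star g / 2)).

Section Width.
Context {R : realType} {g : R}.
Hypothesis g_bound : -2 < g < 2.

Lemma hF_gt0 : 0 < hF g.
Proof. by move: g_bound => /andP[g_gt g_lt]; rewrite /hF sqrtr_gt0; nra. Qed.

Lemma hF_sqr : hF g ^+ 2 = 1 - g ^+ 2 / 4.
Proof. by move: g_bound => /andP[g_gt g_lt]; rewrite /hF sqr_sqrtr // expr2; nra. Qed.

Lemma GF_mul_hF : GF g * hF g = g.
Proof. by rewrite /GF divfK // gt_eqF // hF_gt0. Qed.

Lemma q_star_gt0 : 0 < q_star g.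
Proof. exact: expR_gt0. Qed.

Lemma profile_q_star : profile (- GF g) (hF g) (- g / 2) = q_star g ^+ 2.
Proof.
have h_neq0 : hF g != 0 by rewrite gt_eqF // hF_gt0.
rewrite /profile.
have -> : - g / 2 / hF g = - GF g / 2 by rewrite /GF; field.
have -> : (- g / 2) ^+ 2 + hF g ^+ 2 = 1 by rewrite hF_sqr; field.
by rewrite divr1 /q_star -expRM_natr /Phi_star; congr expR; field.
Qed.

Lemma profile_lt_q_star (s : R) :
  s != - g / 2 -> profile (- GF g) (hF g) s < q_star g ^+ 2.
Proof.
have max_eq : - GF g * hF g / 2 = - g / 2 by rewrite mulNr GF_mul_hF.
by rewrite -profile_q_star -{1 2}max_eq; apply: profile_lt_max; exact: hF_gt0.
Qed.

Lemma profile_le_q_star (s : R) : profile (- GF g) (hF g) s <= q_star g ^+ 2.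
Proof.
case: (eqVneq s (- g / 2)) => [-> | s_neq]; first by rewrite profile_q_star.
exact/ltW/profile_lt_q_star.
Qed.

Context {n : nat} {r : 'M[R]_n.+1}.

Lemma KF_ge0 (v : 'rV[R]_n.+2) : 0 <= KF r g v.
Proof. by rewrite /KF; case: eqP => // _; rewrite mulr_ge0 ?sqrtr_ge0 ?expR_ge0. Qed.

Lemma KF_sqr_mul_profile {v : 'rV[R]_n.+2} : 0 < qf r v ->
  KF r g v ^+ 2 * profile (- GF g) (hF g) (AF r g v / qf r v) = qf r v ^+ 2.
Proof.
move=> q_gt0.
have v_neq0 : v != 0 by apply: contraTneq q_gt0 => ->; rewrite qf0 ltxx.
have h_neq0 : hF g != 0 by rewrite gt_eqF // hF_gt0.
have q_neq0 : qf r v != 0 by rewrite gt_eqF.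
rewrite /KF (negbTE v_neq0) /JF /PhiF q_gt0 /profile.
have -> : AF r g v / (hF g * qf r v) = AF r g v / qf r v / hF g.
  by field; rewrite h_neq0 q_neq0.
set s := AF r g v / qf r v.
have -> : BF r g v = qf r v ^+ 2 * (s ^+ 2 + hF g ^+ 2).
  by rewrite /BF /s /AF hF_sqr; field.
have den_gt0 : 0 < s ^+ 2 + hF g ^+ 2 by rewrite ltr_wpDl ?sqr_ge0 ?exprn_gt0 ?hF_gt0.
set e := expR (GF g * atan (s / hF g) / 2).
have -> : expR (- GF g * atan (s / hF g)) = (e ^+ 2)^-1.
  by rewrite -expRM_natr -expRN; congr expR; field.
rewrite exprMn sqr_sqrtr; last by rewrite mulr_ge0 ?sqr_ge0 ?(ltW den_gt0).
by field; rewrite !gt_eqF ?expR_gt0.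
Qed.

Lemma AF_div_qf_eq {v : 'rV[R]_n.+2} : 0 < qf r v ->
  (AF r g v / qf r v == - g / 2) = (Zc v == - (g * qf r v)).
Proof.
move=> q_gt0; have q_neq0 : qf r v != 0 by rewrite gt_eqF.
rewrite /AF; apply/eqP/eqP => [slope | ->]; last by field.
apply: (addIr (g * qf r v / 2)); by rewrite -[LHS](divfK q_neq0) slope; field.
Qed.

Lemma qf_sqr_le_profile {v : 'rV[R]_n.+2} : KF r g v <= 1 -> 0 < qf r v ->
  qf r v ^+ 2 <= profile (- GF g) (hF g) (AF r g v / qf r v).
Proof.
move=> K_le1 q_gt0; rewrite -(KF_sqr_mul_profile q_gt0).
by rewrite ler_piMl ?expr_le1 ?KF_ge0 // ltW // profile_gt0 // hF_gt0.
Qed.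

Lemma qf_le_q_star {v : 'rV[R]_n.+2} : KF r g v <= 1 -> qf r v <= q_star g.
Proof.
move=> K_le1; have [q_gt0 | q_le0] := ltrP 0 (qf r v); last first.
  exact: le_trans q_le0 (ltW q_star_gt0).
rewrite -ler_sqr ?nnegrE ?(ltW q_gt0) ?(ltW q_star_gt0) //.
exact: le_trans (qf_sqr_le_profile K_le1 q_gt0) (profile_le_q_star _).
Qed.

Lemma Zc_of_qf_eq_q_star {v : 'rV[R]_n.+2} : KF r g v <= 1 -> qf r v = q_star g ->
  Zc v = - (g * qf r v).
Proof.
move=> K_le1 q_eq; have q_gt0 : 0 < qf r v by rewrite q_eq q_star_gt0.
apply/eqP; rewrite -AF_div_qf_eq //; apply/negPn/negP => /profile_lt_q_star.
by rewrite -q_eq ltNge qf_sqr_le_profile.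
Qed.

Lemma PhiF_on_ray {v : 'rV[R]_n.+2} : 0 < qf r v -> Zc v = - (g * qf r v) ->
  PhiF r g v = Phi_star g.
Proof.
move=> q_gt0 Z_eq; rewrite /PhiF q_gt0 /AF Z_eq /Phi_star /GF; congr atan.
by field; rewrite gt_eqF ?hF_gt0 // gt_eqF.
Qed.

Lemma KF_on_ray {v : 'rV[R]_n.+2} : 0 < qf r v -> Zc v = - (g * qf r v) ->
  KF r g v = qf r v / q_star g.
Proof.
move=> q_gt0 /eqP; rewrite -AF_div_qf_eq // => /eqP slope.
have := KF_sqr_mul_profile q_gt0; rewrite slope profile_q_star -exprMn => /eqP.
rewrite eqrXn2 ?mulr_ge0 ?KF_ge0 ?ltW ?q_star_gt0 // => /eqP <-.
by rewrite mulfK // gt_eqF // q_star_gt0.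
Qed.

Lemma q_star_attained : sym_posdef r ->
  exists v : 'rV[R]_n.+2, KF r g v = 1 /\ qf r v = q_star g.
Proof.
move=> r_posdef.
have [v [q_eq Z_eq]] := exists_qf_Zc (q_star g) (- (g * q_star g)) r_posdef (ltW q_star_gt0).
have q_gt0 : 0 < qf r v by rewrite q_eq q_star_gt0.
have on_ray : Zc v = - (g * qf r v) by rewrite q_eq.
by exists v; rewrite (KF_on_ray q_gt0 on_ray) q_eq divff // gt_eqF // q_star_gt0.
Qed.

End Width.

Theorem theorem2p9 (R : realType) (n : nat) (r : 'M[R]_(n.+1)) (g : R) :
  sym_posdef r -> -2 < g < 2 ->
  exists (qss Phiss : R),
    (* q** = max { q(R) : K(g;R) <= 1 } : attained and an upper bound *)
    ((exists v : 'rV[R]_(n.+2), KF r g v <= 1 /\ qf r v = qss) /\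
     (forall v : 'rV[R]_(n.+2), KF r g v <= 1 -> qf r v <= qss)) /\
    (* Phi** = Phi(g;R) at any R with q(R) > 0 and Z = -g q(R) *)
    (forall v : 'rV[R]_(n.+2),
        0 < qf r v -> Zc v = - (g * qf r v) -> PhiF r g v = Phiss) /\
    (* width of the Finsleroid *)
    2 * qss = 2 * expR (- (GF g * Phiss / 2)) /\
    (* the maximum is attained (only) at points with Z = -g q *)
    (forall v : 'rV[R]_(n.+2),
        KF r g v <= 1 -> qf r v = qss -> Zc v = - (g * qf r v)).
Proof.
move=> r_posdef g_bound; exists (q_star g), (Phi_star g).
split; [split | split; [|split]] => //.
- by have [v [K_eq q_eq]] := q_star_attained g_bound r_posdef; exists v; rewrite K_eq.
- exact: qf_le_q_star.
- exact: PhiF_on_ray.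
- exact: Zc_of_qf_eq_q_star.
Qed.
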